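(* Let $L$ be a varietal $\mathbb{M}$-compositional family of logics. An $\mathbb{M}$-algebra $\mathfrak{A}$ is $L$-definable if, and only if, it belongs to the pseudo-variety generated by all theory algebras $\Theta_\Delta X$, where $X$ ranges over alphabets and $\Delta\subseteq L$ over sort-wise finite subfamilies such that $\sqsubseteq_{\Delta}$ is a congruence ordering.
   Context: Fix a set $\Xi$ of sorts; $\mathsf{Pos}^\Xi$: $\Xi$-sorted families of partial orders with sort-wise monotone maps. $\mathbb{M}$ is a monad on $\mathsf{Pos}^\Xi$ ($\mathrm{flat},\mathrm{sing}$) preserving injective, surjective, bijective functions and preimages and using the standard ordering. $\mathbb{M}$-algebras $\langle A,\pi\rangle$: $\pi\circ\mathbb{M}\pi=\pi\circ\mathrm{flat}$, $\pi\circ\mathrm{sing}=\mathrm{id}$. Finitary: sort-wise finite and finitely generated. A preorder $\sqsubseteq$ containing the order is a congruence ordering if $\mathbb{M}q(s)\leq\mathbb{M}q(t)\Rightarrow\pi(s)\sqsubseteq\pi(t)$, $q$ the quotient map onto the ordered set of classes; the quotient algebra's product satisfies $\pi\circ\mathbb{M}q=q\circ\pi$. Quotient of $\mathfrak{B}$: codomain of a surjective morphism from $\mathfrak{B}$. For $\Delta\subseteq\Xi$: $A|_\Delta$ the part with sorts in $\Delta$, $\mathfrak{A}|_\Delta$ the $\mathbb{M}|_\Delta$-algebra on it ($\mathbb{M}|_\Delta A:=(\mathbb{M}(A|_\Delta))|_\Delta$, restricted product). $\mathfrak{B}$ is a sort-accumulation point of $\mathcal{A}$ if for every finite $\Delta\subseteq\Xi$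 there is $\mathfrak{A}\in\mathcal{A}$ with $\mathfrak{B}|_\Delta$ a quotient of $\mathfrak{A}|_\Delta$. A pseudo-variety is a class of finitary algebras closed under quotients, finitary subalgebras of finite products and sort-accumulation points; ''generated by'' = smallest containing. Alphabet: finite unordered $\Sigma$; language $K\subseteq\mathbb{M}_\xi\Sigma$; contexts and derivatives $p^{-1}[K]$ as usual (substitution into a hole $\Box$); a variety of languages is closed under finite unions, intersections, inverse algebra morphisms $\mathbb{M}\Sigma\to\mathbb{M}\Gamma$ and derivatives. A logic: $\Xi$-sorted formulae and models with satisfaction; for a set $\Delta$ of formulae, $M\sqsubseteq_\Delta N$ iff every formula of $\Delta$ true in $M$ is true in $N$. A family of logics $L$ assigns to each alphabet $\Sigma$ a logic $L[\Sigma]$ with models $\mathbb{M}\Sigma$ and to each $f:\Sigma\to\Gamma$ a sort-preserving $\lambda_f:L[\Gamma]\to L[\Sigma]$ with $s\models\lambda_f(\varphi)\iff\mathbb{M}f(s)\models\varphi$. $K$ is $L$-definable if $K=\{s:s\models\varphi\}$ for some formula; for finite ordered $C$, $K\subseteq\mathbb{M}C$ is $L$-definable if its preimage under $\mathbb{M}\iota$ ($\iota$ the identity from $C$ with trivial order) is. $L$ is varietal if $L$-definable languages form a variety of languages. A subfamily $\Delta\subseteq L$ picks $\Delta[\Sigma]\subseteq L[\Sigma]$ (finite / sort-wise finite if each $\Delta[\Sigma]$ is finite / finite in each sort, up to equivalence). $L$ is $\mathbb{M}$-compositional if for every finite subfamily $\Phi$ there is a sort-wise finite $\Delta\supseteq\Phi$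 with $\sqsubseteq_{\Delta[\Sigma]}$ a congruence ordering on $\mathbb{M}\Sigma$ for all $\Sigma$; for such $\Delta$, $\Theta_\Delta\Sigma:=\mathbb{M}\Sigma/{\sqsubseteq_{\Delta[\Sigma]}}$. A finite $C\subseteq A$ is $L$-definably embedded if $\pi^{-1}(\uparrow a)\cap\mathbb{M}C$ is $L$-definable for each $a\in A$; $\mathfrak{A}$ is $L$-definable if finitary and all finite subsets are $L$-definably embedded. *)

From Stdlib Require Import List ClassicalEpsilon FunctionalExtensionality
  PropExtensionality ProofIrrelevance.
Record SPos (Xi : Type) : Type := {
  car : Xi -> Type;
  le : forall x, car x -> car x -> Prop;
  le_refl : forall x a, le x a a;
  le_trans : forall x a b c, le x a b -> le x b c -> le x a c;
  le_antisym : forall x a b, le x a b -> le x b a -> a = b }.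
Arguments car {Xi} s x.
Arguments le {Xi} s x _ _.
Arguments le_refl {Xi} s {x} a.
Arguments le_trans {Xi} s {x a b c} _ _.
Arguments le_antisym {Xi} s {x a b} _ _.

Record mor Xi (A B : SPos Xi) : Type := {
  fn : forall x, car A x -> car B x;
  fn_mono : forall x a b, le A x a b -> le B x (fn x a) (fn x b) }.
Arguments mor {Xi} A B.
Arguments fn {Xi A B} m x _.
Arguments fn_mono {Xi A B} m {x a b} _.

Definition mid {Xi : Type} (A : SPos Xi) : mor A A :=
  {| fn := fun x a => a; fn_mono := fun x a b h => h |}.
Definition mcomp {Xi : Type} {A B C : SPos Xi} (g : mor B C) (f : mor A B) : mor A C :=
  {| fn := fun x a => fn g x (fn f x a);
     fn_mono := fun x a b h => fn_mono g (fn_mono f h) |}.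

Definition sort_surj {Xi : Type} {A B : SPos Xi} (f : mor A B) : Prop :=
  forall x (b : car B x), exists a, fn f x a = b.
Definition sort_inj {Xi : Type} {A B : SPos Xi} (f : mor A B) : Prop :=
  forall x (a a' : car A x), fn f x a = fn f x a' -> a = a'.

Definition sub {Xi : Type} (A : SPos Xi) (P : forall x, car A x -> Prop) : SPos Xi.
Proof.
  refine {| car := fun x => {a : car A x | P x a};
            le := fun x a b => le A x (proj1_sig a) (proj1_sig b) |}.
  - intros; apply le_refl.
  - intros x a b c; apply le_trans.
  - intros x [a pa] [b pb] h1 h2; simpl in *.
    pose proof (le_antisym _ h1 h2); subst. f_equal. apply proof_irrelevance.
Defined.

Definition incl {Xi : Type} (A : SPos Xi) (P : forall x, car A x -> Prop) : mor (sub A P) A :=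
  {| fn := fun x (a : car (sub A P) x) => proj1_sig a; fn_mono := fun x a b h => h |}.

Definition pairpos {Xi : Type} (A B : SPos Xi) : SPos Xi.
Proof.
  refine {| car := fun x => (car A x * car B x)%type;
            le := fun x p q => le A x (fst p) (fst q) /\ le B x (snd p) (snd q) |}.
  - intros; split; apply le_refl.
  - intros x p q r [h1 h2] [h3 h4]; split; eapply le_trans; eauto.
  - intros x [a b] [c d] [h1 h2] [h3 h4]; simpl in *.
    f_equal; apply le_antisym; auto.
Defined.

Definition fstm {Xi : Type} (A B : SPos Xi) : mor (pairpos A B) A :=
  {| fn := fun x (p : car (pairpos A B) x) => fst p; fn_mono := fun x p q h => proj1 h |}.
Definition sndm {Xi : Type} (A B : SPos Xi) : mor (pairpos A B) B :=
  {| fn := fun x (p : car (pairpos A B) x) => snd p; fn_mono := fun x p q h => proj2 h |}.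

Definition relpos {Xi : Type} (A : SPos Xi) : SPos Xi :=
  sub (pairpos A A) (fun x p => le A x (fst p) (snd p)).
Definition relp1 {Xi : Type} (A : SPos Xi) : mor (relpos A) A :=
  mcomp (fstm A A) (incl _ _).
Definition relp2 {Xi : Type} (A : SPos Xi) : mor (relpos A) A :=
  mcomp (sndm A A) (incl _ _).

Record Monad (Xi : Type) : Type := {
  Mo : SPos Xi -> SPos Xi;
  Mmap : forall A B, mor A B -> mor (Mo A) (Mo B);
  msing : forall A, mor A (Mo A);
  mflat : forall A, mor (Mo (Mo A)) (Mo A);
  Mmap_id : forall A x s, fn (Mmap _ _ (mid A)) x s = s;
  Mmap_comp : forall A B C (f : mor A B) (g : mor B C) x s,
      fn (Mmap _ _ (mcomp g f)) x s = fn (Mmap _ _ g) x (fn (Mmap _ _ f) x s);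
  msing_nat : forall A B (f : mor A B) x a,
      fn (Mmap _ _ f) x (fn (msing A) x a) = fn (msing B) x (fn f x a);
  mflat_nat : forall A B (f : mor A B) x s,
      fn (Mmap _ _ f) x (fn (mflat A) x s) = fn (mflat B) x (fn (Mmap _ _ (Mmap _ _ f)) x s);
  mflat_sing : forall A x s, fn (mflat A) x (fn (msing (Mo A)) x s) = s;
  mflat_Msing : forall A x s, fn (mflat A) x (fn (Mmap _ _ (msing A)) x s) = s;
  mflat_assoc : forall A x s,
      fn (mflat A) x (fn (mflat (Mo A)) x s) = fn (mflat A) x (fn (Mmap _ _ (mflat A)) x s);
  pres_inj : forall A B (f : mor A B), sort_inj f -> sort_inj (Mmap _ _ f);
  pres_surj : forall A B (f : mor A B), sort_surj f -> sort_surj (Mmap _ _ f);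
  (* M preserves preimages: M(f^-1[C]) = (Mf)^-1[MC] *)
  pres_preim : forall A B (f : mor A B) (P : forall x, car B x -> Prop) x
      (s : car (Mo A) x),
      (exists u : car (Mo (sub B P)) x, fn (Mmap _ _ (incl B P)) x u = fn (Mmap _ _ f) x s) <->
      (exists v : car (Mo (sub A (fun y a => P y (fn f y a)))) x,
          fn (Mmap _ _ (incl _ _)) x v = s);
  std_order : forall A x (s t : car (Mo A) x),
      le (Mo A) x s t <->
      exists u : car (Mo (relpos A)) x,
        fn (Mmap _ _ (relp1 A)) x u = s /\ fn (Mmap _ _ (relp2 A)) x u = t }.
Arguments Mo {Xi} m A.
Arguments Mmap {Xi} m {A B} f.
Arguments msing {Xi} m A.
Arguments mflat {Xi} m A.

Record PreAlg Xi {T : Monad Xi} : Type := {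
  acar : SPos Xi;
  aprod : mor (Mo T acar) acar }.
Arguments PreAlg {Xi} T.
Arguments acar {Xi T} p.
Arguments aprod {Xi T} p.

Definition is_alg {Xi : Type} {T : Monad Xi} (A : PreAlg T) : Prop :=
  (forall x s, fn (aprod A) x (fn (Mmap T (aprod A)) x s)
               = fn (aprod A) x (fn (mflat T (acar A)) x s)) /\
  (forall x a, fn (aprod A) x (fn (msing T (acar A)) x a) = a).

Definition is_morph {Xi : Type} {T : Monad Xi} (A B : PreAlg T) (h : mor (acar A) (acar B)) : Prop :=
  forall x s, fn h x (fn (aprod A) x s) = fn (aprod B) x (fn (Mmap T h) x s).

Definition freealg {Xi : Type} (T : Monad Xi) (S : SPos Xi) : PreAlg T :=
  {| acar := Mo T S; aprod := mflat T S |}.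

Definition spos_finite {Xi : Type} (A : SPos Xi) : Prop :=
  exists l : list {x : Xi & car A x}, forall x a, In (existT _ x a) l.
Definition sortwise_finite {Xi : Type} (A : SPos Xi) : Prop :=
  forall x, exists l : list (car A x), forall a, In a l.
Definition fin_subset {Xi : Type} (A : SPos Xi) (P : forall x, car A x -> Prop) : Prop :=
  spos_finite (sub A P).

Definition fin_generated {Xi : Type} {T : Monad Xi} (A : PreAlg T) : Prop :=
  exists P, fin_subset (acar A) P /\
    forall x a, exists s : car (Mo T (sub (acar A) P)) x,
      fn (aprod A) x (fn (Mmap T (incl _ P)) x s) = a.

Definition finitary {Xi : Type} {T : Monad Xi} (A : PreAlg T) : Prop :=
  is_alg A /\ sortwise_finite (acar A) /\ fin_generated A.

Definition alg_closed {Xi : Type} {T : Monad Xi} (A : PreAlg T) (P : forall x, car (acar A) x -> Prop) :=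
  forall x (s : car (Mo T (sub (acar A) P)) x),
    P x (fn (aprod A) x (fn (Mmap T (incl _ P)) x s)).

Definition subalg {Xi : Type} {T : Monad Xi} (A : PreAlg T) (P : forall x, car (acar A) x -> Prop)
  (H : alg_closed A P) : PreAlg T.
Proof.
  refine {| acar := sub (acar A) P;
            aprod := {| fn := fun x s => (exist _ _ (H x s) : car (sub (acar A) P) x) |} |}.
  intros x a b h; simpl. apply (fn_mono (aprod A)). apply (fn_mono (Mmap T (incl _ P))). exact h.
Defined.

Definition piPos {Xi : Type} {n : nat} (F : {i : nat | i < n} -> SPos Xi) : SPos Xi.
Proof.
  refine {| car := fun x => forall i, car (F i) x;
            le := fun x a b => forall i, le (F i) x (a i) (b i) |}.
  - intros; apply le_refl.
  - intros x a b c h1 h2 i; eapply le_trans; eauto.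
  - intros x a b h1 h2; apply functional_extensionality_dep; intro i; apply le_antisym; auto.
Defined.

Definition piProj {Xi : Type} {n : nat} (F : {i : nat | i < n} -> SPos Xi) i : mor (piPos F) (F i) :=
  {| fn := fun x (a : car (piPos F) x) => a i; fn_mono := fun x a b h => h i |}.

Definition prodalg {Xi : Type} {T : Monad Xi} {n : nat} (F : {i : nat | i < n} -> PreAlg T) : PreAlg T.
Proof.
  refine {| acar := piPos (fun i => acar (F i));
            aprod := {| fn := fun x s => ((fun i =>
               fn (aprod (F i)) x (fn (Mmap T (piProj (fun i => acar (F i)) i)) x s))
               : car (piPos (fun i => acar (F i))) x) |} |}.
  intros x a b h i; simpl. apply (fn_mono (aprod (F i))), (fn_mono (Mmap T _)), h.
Defined.

(* restriction to a set of sorts D : A|_D, realised as a Xi-sorted poset that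
   is empty outside D *)
Definition res {Xi : Type} (A : SPos Xi) (D : Xi -> Prop) : SPos Xi := sub A (fun x _ => D x).

(* B|_D is a quotient of A|_D (as M|_D-algebras) *)
Definition res_quotient {Xi : Type} {T : Monad Xi} (D : Xi -> Prop) (A B : PreAlg T) : Prop :=
  exists h : mor (res (acar A) D) (res (acar B) D),
    sort_surj h /\
    forall x (d : D x) (s : car (Mo T (res (acar A) D)) x),
      fn h x (exist _ (fn (aprod A) x (fn (Mmap T (incl _ _)) x s)) d)
      = exist _ (fn (aprod B) x (fn (Mmap T (incl _ _)) x (fn (Mmap T h) x s))) d.

Definition finite_sorts {Xi : Type} (D : Xi -> Prop) : Prop :=
  exists l : list Xi, forall x, D x -> In x l.

Definition pseudovariety {Xi : Type} {T : Monad Xi} (V : PreAlg T -> Prop) : Prop :=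
  (forall A, V A -> finitary A) /\
  (forall A B (h : mor (acar A) (acar B)),
      V A -> is_alg B -> is_morph A B h -> sort_surj h -> V B) /\
  (forall n (F : {i : nat | i < n} -> PreAlg T) P (H : alg_closed (prodalg F) P),
      (forall i, V (F i)) -> finitary (subalg _ _ H) -> V (subalg _ _ H)) /\
  (* closed under (finitary) sort-accumulation points *)
  (forall B, finitary B ->
      (forall D, finite_sorts D -> exists A, V A /\ res_quotient D A B) -> V B).

Definition generated_pv {Xi : Type} {T : Monad Xi} (K : PreAlg T -> Prop) (A : PreAlg T) : Prop :=
  forall V, pseudovariety V -> (forall B, K B -> V B) -> V A.

Section Quot.
Variables (Xi : Type) (A : SPos Xi) (R : forall x, car A x -> car A x -> Prop).
Hypothesis Ht : forall x a b c, R x a b -> R x b c -> R x a c.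
Hypothesis Hc : forall x a b, le A x a b -> R x a b.

Definition cls {x} (a : car A x) : car A x -> Prop := fun b => R x a b /\ R x b a.

Lemma Rrefl x a : R x a a. Proof. apply Hc, le_refl. Qed.

Lemma cls_R x a b : cls a = cls b -> R x a b.
Proof.
  intro e. assert (h : cls b b) by (split; apply Rrefl).
  rewrite <- e in h. exact (proj1 h).
Qed.

Definition qpos : SPos Xi.
Proof.
  refine {| car := fun x => {S : car A x -> Prop | exists a, S = cls a};
            le := fun x S T => exists a b, proj1_sig S = cls a /\ proj1_sig T = cls b /\ R x a b |}.
  - intros x [S [a e]]; exists a, a; simpl; repeat split; auto; apply Rrefl.
  - intros x [S hS] [T hT] [U hU] [a [b [e1 [e2 r1]]]] [b' [c [e3 [e4 r2]]]]; simpl in *.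
    exists a, c; repeat split; auto.
    apply Ht with b; auto. apply Ht with b'; auto. apply cls_R. congruence.
  - intros x [S hS] [T hT] [a [b [e1 [e2 r1]]]] [b' [a' [e3 [e4 r2]]]]; simpl in *.
    assert (r3 : R x b a).
    { apply Ht with b'. apply cls_R; congruence.
      apply Ht with a'; auto. apply cls_R; congruence. }
    assert (e : S = T).
    { rewrite e1, e2.
      apply functional_extensionality; intro c; apply propositional_extensionality.
      unfold cls; split; intros [h1 h2]; split; eauto. }
    clear e1 e2 e3 e4. revert hS hT. rewrite e. intros. f_equal. apply proof_irrelevance.
Defined.

Definition qmap : mor A qpos.
Proof.
  refine {| fn := fun x a => (exist _ (cls a) (ex_intro _ a eq_refl) : car qpos x) |}.
  intros x a b h; simpl. exists a, b; repeat split; auto.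
Defined.

Lemma qmap_surj : sort_surj qmap.
Proof.
  intros x [S [a e]]. exists a. simpl. subst S. reflexivity.
Qed.
End Quot.
Arguments qpos {Xi A R} Ht Hc.
Arguments qmap {Xi A R} Ht Hc.
Arguments qmap_surj {Xi A R} Ht Hc.

Definition cong_with {Xi : Type} {T : Monad Xi} (B : PreAlg T)
  (R : forall x, car (acar B) x -> car (acar B) x -> Prop)
  (Ht : forall x a b c, R x a b -> R x b c -> R x a c)
  (Hc : forall x a b, le (acar B) x a b -> R x a b) : Prop :=
  forall x (s t : car (Mo T (acar B)) x),
    le (Mo T (qpos Ht Hc)) x (fn (Mmap T (qmap Ht Hc)) x s) (fn (Mmap T (qmap Ht Hc)) x t) ->
    R x (fn (aprod B) x s) (fn (aprod B) x t).

Definition cong_ordering {Xi : Type} {T : Monad Xi} (B : PreAlg T)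
  (R : forall x, car (acar B) x -> car (acar B) x -> Prop) : Prop :=
  exists Ht Hc, @cong_with Xi T B R Ht Hc.

(* the quotient algebra B / R, with product satisfying  pi o Mq = q o pi *)
Definition quot_pick {Xi : Type} {T : Monad Xi} {B : PreAlg T} {R} Ht Hc x
  (t : car (Mo T (@qpos Xi (acar B) R Ht Hc)) x) :
  {s : car (Mo T (acar B)) x | fn (Mmap T (qmap Ht Hc)) x s = t} :=
  constructive_indefinite_description _ (pres_surj _ T _ _ _ (qmap_surj Ht Hc) x t).

Definition quotalg {Xi : Type} {T : Monad Xi} {B : PreAlg T} {R Ht Hc}
  (H : @cong_with Xi T B R Ht Hc) : PreAlg T.
Proof.
  refine {| acar := qpos Ht Hc;
            aprod := {| fn := fun x t =>
               fn (qmap Ht Hc) x (fn (aprod B) x (proj1_sig (quot_pick Ht Hc x t))) |} |}.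
  intros x t t' h.
  destruct (quot_pick Ht Hc x t) as [s es]; destruct (quot_pick Ht Hc x t') as [s' es'].
  simpl. subst t t'.
  exists (fn (aprod B) x s), (fn (aprod B) x s'); repeat split. apply H, h.
Defined.

Record Alphabet (Xi : Type) : Type := {
  aset : SPos Xi;
  a_discrete : forall x a b, le aset x a b -> a = b;
  a_finite : spos_finite aset }.
Arguments aset {Xi} _.

Definition disc {Xi : Type} (C : SPos Xi) : SPos Xi.
Proof.
  refine {| car := car C; le := fun x a b => a = b |}.
  - reflexivity.
  - intros; congruence.
  - intros; auto.
Defined.

Definition disc_alph {Xi : Type} (C : SPos Xi) (Hf : spos_finite C) : Alphabet Xi :=
  {| aset := disc C; a_discrete := fun x a b h => h; a_finite := Hf |}.

Definition iota {Xi : Type} (C : SPos Xi) : mor (disc C) C :=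
  {| fn := fun x (a : car (disc C) x) => (a : car C x);
     fn_mono := fun x a b (h : a = b) =>
       match h in _ = b' return le C x a b' with eq_refl => le_refl C a end |}.

Record Logics {Xi : Type} (T : Monad Xi) : Type := {
  Form : Alphabet Xi -> Xi -> Type;
  sat : forall S x, car (Mo T (aset S)) x -> Form S x -> Prop;
  lam : forall S G (f : mor (aset S) (aset G)) x, Form G x -> Form S x;
  lam_spec : forall S G (f : mor (aset S) (aset G)) x s phi,
      sat S x s (lam S G f x phi) <-> sat G x (fn (Mmap T f) x s) phi }.
Arguments Form {Xi T} l S x.
Arguments sat {Xi T} l {S x} s phi.
Arguments lam {Xi T} l {S G} f {x} phi.

Section Lang.
Context {Xi : Type} {T : Monad Xi} (L : Logics T).

Definition definable (S : Alphabet Xi) (x : Xi) (K : car (Mo T (aset S)) x -> Prop) : Prop :=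
  exists phi : Form L S x, forall s, K s <-> sat L s phi.

Definition definableC (C : SPos Xi) (x : Xi) (K : car (Mo T C) x -> Prop) : Prop :=
  exists Hf : spos_finite C,
    definable (disc_alph C Hf) x (fun s => K (fn (Mmap T (iota C)) x s)).

(* contexts: p in M(A + {box}) with box a new element of sort zeta *)
Definition hole (A : SPos Xi) (zeta : Xi) : SPos Xi.
Proof.
  refine {| car := fun y => (car A y + {_ : unit | y = zeta})%type;
            le := fun y u v => match u, v with
                               | inl a, inl b => le A y a b
                               | inr _, inr _ => True
                               | _, _ => False end |}.
  - intros y [a|u]; [apply le_refl | exact I].
  - intros y [a|u] [b|v] [c|w]; simpl; try tauto. apply le_trans.
  - intros y [a|[[] e]] [b|[[] e']]; simpl; try tauto.
    + intros; f_equal; apply le_antisym; auto.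
    + intros; f_equal; f_equal; apply proof_irrelevance.
Defined.

Definition plug {A : SPos Xi} {zeta : Xi} (a : car A zeta) : mor (hole A zeta) A.
Proof.
  refine {| fn := fun y (u : car (hole A zeta) y) =>
              match u with
              | inl b => b
              | inr v => eq_rect_r (fun z => car A z) a (proj2_sig v)
              end |}.
  intros y [b|[[] e]] [c|[[] e']]; simpl; try tauto.
  intros _. rewrite (proof_irrelevance _ e e'). apply le_refl.
Defined.

Definition ctx_app {S : Alphabet Xi} {x zeta : Xi}
  (p : car (Mo T (hole (Mo T (aset S)) zeta)) x) (s : car (Mo T (aset S)) zeta)
  : car (Mo T (aset S)) x :=
  fn (mflat T (aset S)) x (fn (Mmap T (plug s)) x p).

Definition varietal : Prop :=
  (forall S x, definable S x (fun _ => False)) /\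
  (forall S x, definable S x (fun _ => True)) /\
  (forall S x K1 K2, definable S x K1 -> definable S x K2 ->
      definable S x (fun s => K1 s \/ K2 s)) /\
  (forall S x K1 K2, definable S x K1 -> definable S x K2 ->
      definable S x (fun s => K1 s /\ K2 s)) /\
  (forall S G (h : mor (Mo T (aset S)) (Mo T (aset G))),
      is_morph (freealg T (aset S)) (freealg T (aset G)) h ->
      forall x K, definable G x K -> definable S x (fun s => K (fn h x s))) /\
  (forall S x zeta (p : car (Mo T (hole (Mo T (aset S)) zeta)) x) K,
      definable S x K -> definable S zeta (fun s => K (ctx_app p s))).

Definition Subfam : Type := forall S x, Form L S x -> Prop.

Definition equivf {S x} (phi psi : Form L S x) : Prop :=
  forall s, sat L s phi <-> sat L s psi.

Definition finite_sub (D : Subfam) : Prop :=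
  forall S, exists l : list {x : Xi & Form L S x},
    (forall e, In e l -> D S (projT1 e) (projT2 e)) /\
    forall x phi, D S x phi -> exists psi, In (existT _ x psi) l /\ equivf phi psi.

Definition sortwise_finite_sub (D : Subfam) : Prop :=
  forall S x, exists l : list (Form L S x),
    (forall psi, In psi l -> D S x psi) /\
    forall phi, D S x phi -> exists psi, In psi l /\ equivf phi psi.

Definition sqle (D : Subfam) (S : Alphabet Xi) :
  forall x, car (Mo T (aset S)) x -> car (Mo T (aset S)) x -> Prop :=
  fun x s t => forall phi, D S x phi -> sat L s phi -> sat L t phi.

Definition compositional : Prop :=
  forall Phi : Subfam, finite_sub Phi ->
    exists Delta : Subfam, sortwise_finite_sub Delta /\
      (forall S x phi, Phi S x phi -> Delta S x phi) /\
      forall S, cong_ordering (freealg T (aset S)) (sqle Delta S).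

Definition theory_alg (B : PreAlg T) : Prop :=
  exists (S : Alphabet Xi) (Delta : Subfam), sortwise_finite_sub Delta /\
    exists Ht Hc (H : cong_with (freealg T (aset S)) (sqle Delta S) Ht Hc),
      B = quotalg H.

Definition def_embedded (A : PreAlg T) (P : forall x, car (acar A) x -> Prop) : Prop :=
  forall x (a : car (acar A) x),
    definableC (sub (acar A) P) x
      (fun s => le (acar A) x a (fn (aprod A) x (fn (Mmap T (incl _ P)) x s))).

Definition L_definable_alg (A : PreAlg T) : Prop :=
  finitary A /\ forall P, fin_subset (acar A) P -> def_embedded A P.
End Lang.

From Stdlib Require Import List ClassicalEpsilon FunctionalExtensionality
  PropExtensionality ProofIrrelevance Classical Lia.

(** The languages to be shown definable all say "the value of a term over a finite set of
    generators satisfies an upward-closed condition", and upward-closed conditions on a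
    sortwise finite L-definable algebra are finite unions of definable up-sets.  Hence
    L-definable algebras are closed under quotients, finitary subalgebras of finite products
    and sort-accumulation points, and each theory algebra [M Sigma / <=_Delta] is
    L-definable: its up-sets are pulled back, along the substitution of representatives,
    from finite Boolean combinations of formulas of [Delta].
    Conversely, if [A] is generated by a finite [C] and the formulas [phi a] define the
    up-sets [{s | a <= eval s}], then on a finite set of sorts these formulas lie in some
    compositional [Delta]; since [s <=_Delta t] forces [eval s <= eval t] there, evaluation
    [M C -> A] factors through [Theta_Delta C] on those sorts, and [A] is a
    sort-accumulation point of theory algebras. *)

Lemma proj1_sig_inj {U : Type} {P : U -> Prop} (a b : {u | P u}) :
  proj1_sig a = proj1_sig b -> a = b.
Proof. apply eq_sig_hprop; intros; apply proof_irrelevance. Qed.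

Lemma ord_listing n : exists l : list {i : nat | i < n}, forall i, In i l.
Proof.
  induction n as [|n [l Hl]].
  - exists nil. intros [i hi]. lia.
  - exists (exist (fun k => k < S n) n (le_n _)
            :: map (fun i => exist (fun k => k < S n) (proj1_sig i) (le_S _ _ (proj2_sig i))) l).
    intros [i hi]. destruct (PeanoNat.Nat.eq_dec i n) as [->|ne].
    + left. apply proj1_sig_inj. reflexivity.
    + right. assert (hi' : i < n) by lia.
      apply in_map_iff. exists (exist _ i hi').
      split; [apply proj1_sig_inj; reflexivity | apply Hl].
Qed.

Lemma finitely_many_types {U : Type} (ps : list (U -> Prop)) :
  exists reps : list U, forall u, exists v, In v reps /\ forall p, In p ps -> (p u <-> p v).
Proof.
  assert (witnesses : forall Q : U -> Prop, exists ws, forall u, Q u -> exists w, In w ws /\ Q w).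
  { intro Q. destruct (classic (exists u, Q u)) as [[w Qw]|none].
    - exists (w :: nil). intros _ _. exists w. split; [left|]; auto.
    - exists nil. intros u Qu. contradiction (none (ex_intro _ u Qu)). }
  induction ps as [|p ps [reps Hreps]].
  - destruct (witnesses (fun _ => True)) as [ws Hws].
    exists ws. intro u. destruct (Hws u I) as [w [Hw _]]. exists w. split; [exact Hw | intros p []].
  - set (agree := fun u v => forall q, In q ps -> (q u <-> q v)).
    assert (Hsplit : forall v, exists ws, forall u, agree u v ->
               exists w, In w ws /\ forall q, In q (p :: ps) -> (q u <-> q w)).
    { intro v.
      destruct (witnesses (fun w => agree w v /\ p w)) as [ws1 Hws1].
      destruct (witnesses (fun w => agree w v /\ ~ p w)) as [ws2 Hws2].
      exists (ws1 ++ ws2). intros u Hu.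
      destruct (classic (p u)) as [pu|npu].
      - destruct (Hws1 u (conj Hu pu)) as [w [Hw [Hwv pw]]].
        exists w. split; [apply in_or_app; left; exact Hw|].
        intros q [<-|Hq]; [tauto|]. specialize (Hu q Hq); specialize (Hwv q Hq); tauto.
      - destruct (Hws2 u (conj Hu npu)) as [w [Hw [Hwv pw]]].
        exists w. split; [apply in_or_app; right; exact Hw|].
        intros q [<-|Hq]; [tauto|]. specialize (Hu q Hq); specialize (Hwv q Hq); tauto. }
    destruct (choice _ Hsplit) as [f Hf].
    exists (flat_map f reps). intro u.
    destruct (Hreps u) as [v [Hv Huv]].
    destruct (Hf v u Huv) as [w [Hw Huw]].
    exists w. split; [apply in_flat_map; exists v; auto | exact Huw].
Qed.

Section Posets.
Context {Xi : Type}.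

Lemma mor_ext {A B : SPos Xi} (f g : mor A B) :
  (forall x a, fn f x a = fn g x a) -> f = g.
Proof.
  destruct f as [f hf], g as [g hg]; simpl; intro H.
  assert (f = g) as <- by (apply functional_extensionality_dep; intro x;
                            apply functional_extensionality; apply H).
  f_equal. apply proof_irrelevance.
Qed.

Lemma sort_surj_section {A B : SPos Xi} (h : mor A B) :
  sort_surj h -> exists r : forall x, car B x -> car A x, forall x b, fn h x (r x b) = b.
Proof.
  intro Hs. exists (fun x b => proj1_sig (constructive_indefinite_description _ (Hs x b))).
  intros x b. apply proj2_sig.
Qed.

Lemma sortwise_finite_image {A B : SPos Xi} (h : mor A B) :
  sort_surj h -> sortwise_finite A -> sortwise_finite B.
Proof.
  intros Hs HA x. destruct (HA x) as [l Hl]. exists (map (fn h x) l).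
  intro b. destruct (Hs x b) as [a <-]. apply in_map, Hl.
Qed.

Definition image {C B : SPos Xi} (r : forall x, car C x -> car B x) : forall x, car B x -> Prop :=
  fun x b => exists c, r x c = b.

Definition onto_image {C B : SPos Xi} (r : forall x, car C x -> car B x) x (c : car C x) :
  car (sub B (image r)) x :=
  exist _ (r x c) (ex_intro _ c eq_refl).

Definition onto_image_mor {A B : SPos Xi} (f : mor A B) : mor A (sub B (image (fn f))) :=
  {| fn := onto_image (fn f); fn_mono := fun x a b e => fn_mono f e |}.

Lemma image_finite {C B : SPos Xi} (r : forall x, car C x -> car B x) :
  spos_finite C -> fin_subset B (image r).
Proof.
  intros [l Hl].
  exists (map (fun e => existT (fun x => car (sub B (image r)) x)
                           (projT1 e) (onto_image r _ (projT2 e))) l).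
  intros x [b [c <-]]. apply in_map_iff. exists (existT _ x c). split; [reflexivity | apply Hl].
Qed.

Definition assign {C B : SPos Xi} (r : forall x, car C x -> car B x) : mor (disc C) B.
Proof.
  refine {| fn := (r : forall x, car (disc C) x -> car B x) |}.
  intros x a b e. simpl in e. subst. apply le_refl.
Defined.

Definition res_mor {A B : SPos Xi} (f : mor A B) (D : Xi -> Prop) : mor (res A D) (res B D) :=
  {| fn := fun x (a : car (res A D) x) =>
             exist (fun _ => D x) (fn f x (proj1_sig a)) (proj2_sig a) : car (res B D) x;
     fn_mono := fun x a b e => fn_mono f e |}.

Lemma res_mor_surj {A B : SPos Xi} (f : mor A B) D : sort_surj f -> sort_surj (res_mor f D).
Proof.
  intros Hs x [b d]. destruct (Hs x b) as [a <-]. exists (exist _ a d). reflexivity.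
Qed.

Section Quotient.
Variables (A : SPos Xi) (R : forall x, car A x -> car A x -> Prop).
Hypotheses (Ht : forall x a b c, R x a b -> R x b c -> R x a c)
           (Hc : forall x a b, le A x a b -> R x a b).

Lemma qmap_eq x (a b : car A x) : R x a b -> R x b a -> fn (qmap Ht Hc) x a = fn (qmap Ht Hc) x b.
Proof.
  intros rab rba. apply proj1_sig_inj. simpl. unfold cls.
  apply functional_extensionality; intro c; apply propositional_extensionality.
  split; intros [h1 h2]; split; eauto.
Qed.

Lemma qmap_le x (a b : car A x) :
  le (qpos Ht Hc) x (fn (qmap Ht Hc) x a) (fn (qmap Ht Hc) x b) <-> R x a b.
Proof.
  split.
  - intros [a' [b' [ea [eb r]]]]. simpl in ea, eb.
    apply Ht with a'; [apply (cls_R _ _ _ Hc); exact ea|].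
    apply Ht with b'; [exact r | apply (cls_R _ _ _ Hc); symmetry; exact eb].
  - intro r. exists a, b. auto.
Qed.

Lemma qmap_R x (a b : car A x) : fn (qmap Ht Hc) x a = fn (qmap Ht Hc) x b -> R x a b.
Proof. intro e. apply qmap_le. rewrite e. apply le_refl. Qed.
End Quotient.
End Posets.

Section Algebras.
Context {Xi : Type} {T : Monad Xi}.

Lemma Mmap_ext {A B : SPos Xi} (f g : mor A B) :
  (forall x a, fn f x a = fn g x a) -> forall x s, fn (Mmap T f) x s = fn (Mmap T g) x s.
Proof. intros H x s. rewrite (mor_ext f g H). reflexivity. Qed.

Definition eval_mor (A : PreAlg T) {C : SPos Xi} (r : forall x, car C x -> car (acar A) x) :
  mor (Mo T (disc C)) (acar A) :=
  mcomp (aprod A) (Mmap T (assign r)).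

Definition eval_in (A : PreAlg T) (P : forall x, car (acar A) x -> Prop) :
  mor (Mo T (disc (sub (acar A) P))) (acar A) :=
  eval_mor A (fun x (p : car (sub (acar A) P) x) => proj1_sig p).

Lemma eval_mor_ext (A : PreAlg T) {C : SPos Xi} (r r' : forall x, car C x -> car (acar A) x) :
  (forall x c, r x c = r' x c) -> forall x s, fn (eval_mor A r) x s = fn (eval_mor A r') x s.
Proof. intros H x s. simpl. f_equal. apply Mmap_ext. exact H. Qed.

Lemma eval_mor_relabel (A : PreAlg T) {C C' : SPos Xi} (k : forall x, car C x -> car C' x)
  (r : forall x, car C' x -> car (acar A) x) x s :
  fn (eval_mor A r) x (fn (Mmap T (assign (B := disc C') k)) x s)
  = fn (eval_mor A (fun y c => r y (k y c))) x s.
Proof. simpl. rewrite <- Mmap_comp. f_equal. apply Mmap_ext. reflexivity. Qed.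

Lemma morph_eval_mor (A B : PreAlg T) (h : mor (acar A) (acar B)) {C : SPos Xi}
  (r : forall x, car C x -> car (acar A) x) :
  is_morph A B h ->
  forall x s, fn h x (fn (eval_mor A r) x s) = fn (eval_mor B (fun y c => fn h y (r y c))) x s.
Proof. intros Hm x s. simpl. rewrite Hm, <- Mmap_comp. f_equal. apply Mmap_ext. reflexivity. Qed.

Lemma eval_mor_morph (A : PreAlg T) {C : SPos Xi} (r : forall x, car C x -> car (acar A) x) :
  is_alg A -> is_morph (freealg T (disc C)) A (eval_mor A r).
Proof.
  intros [Hassoc _] x s. simpl.
  rewrite mflat_nat, <- Hassoc, <- Mmap_comp. reflexivity.
Qed.

Lemma eval_in_surj (A : PreAlg T) P :
  (forall x a, exists s, fn (aprod A) x (fn (Mmap T (incl (acar A) P)) x s) = a) ->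
  sort_surj (eval_in A P).
Proof.
  intros Hgen x a. destruct (Hgen x a) as [s <-].
  assert (Hiota : sort_surj (iota (sub (acar A) P))) by (intros y p; exists p; reflexivity).
  destruct (pres_surj _ T _ _ _ Hiota x s) as [t <-].
  exists t. simpl. rewrite <- Mmap_comp. f_equal. apply Mmap_ext. reflexivity.
Qed.

Lemma freealg_is_alg (S : SPos Xi) : is_alg (freealg T S).
Proof. split; intros; simpl; [symmetry; apply mflat_assoc | apply mflat_sing]. Qed.

Lemma freealg_fin_generated (S : SPos Xi) : spos_finite S -> fin_generated (freealg T S).
Proof.
  intro Hf. exists (image (fn (msing T S))). split; [exact (image_finite _ Hf)|].
  intros x s. exists (fn (Mmap T (onto_image_mor (msing T S))) x s).
  simpl. rewrite <- Mmap_comp.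
  rewrite (Mmap_ext _ (msing T S)) by reflexivity.
  apply mflat_Msing.
Qed.

Lemma fin_generated_image (A B : PreAlg T) (h : mor (acar A) (acar B)) :
  is_morph A B h -> sort_surj h -> fin_generated A -> fin_generated B.
Proof.
  intros Hm Hs [P [HP Hgen]].
  set (hP := mcomp h (incl (acar A) P)).
  exists (image (fn hP)). split; [exact (image_finite _ HP)|].
  intros x b. destruct (Hs x b) as [a <-]. destruct (Hgen x a) as [s <-].
  exists (fn (Mmap T (onto_image_mor hP)) x s).
  rewrite Hm, <- !Mmap_comp. reflexivity.
Qed.

Section QuotientAlgebra.
Variables (B : PreAlg T) (R : forall x, car (acar B) x -> car (acar B) x -> Prop).
Variables (Ht : forall x a b c, R x a b -> R x b c -> R x a c)
          (Hc : forall x a b, le (acar B) x a b -> R x a b)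
          (H : cong_with B R Ht Hc).

Lemma qmap_morph : is_morph B (quotalg H) (qmap Ht Hc).
Proof.
  intros x s. simpl. destruct (quot_pick Ht Hc x _) as [s' e]. simpl.
  apply (qmap_eq _ _ Ht Hc); apply H; rewrite e; apply le_refl.
Qed.

Lemma quotalg_is_alg : is_alg B -> is_alg (quotalg H).
Proof.
  intros [Hassoc Hunit]. split.
  - intros x s.
    destruct (pres_surj _ T _ _ _ (pres_surj _ T _ _ _ (qmap_surj Ht Hc)) x s) as [s' <-].
    rewrite <- Mmap_comp.
    rewrite (Mmap_ext _ (mcomp (qmap Ht Hc) (aprod B))) by (intros; symmetry; apply qmap_morph).
    rewrite Mmap_comp, <- !qmap_morph, <- mflat_nat, <- qmap_morph, Hassoc. reflexivity.
  - intros x c. destruct (qmap_surj Ht Hc x c) as [a <-].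
    rewrite <- msing_nat, <- qmap_morph, Hunit. reflexivity.
Qed.

Lemma res_quotient_factor (A : PreAlg T) (e : mor (acar B) (acar A)) (D : Xi -> Prop) :
  is_morph B A e -> sort_surj e ->
  (forall x, D x -> forall s t, R x s t -> le (acar A) x (fn e x s) (fn e x t)) ->
  res_quotient D (quotalg H) A.
Proof.
  intros Hm Hs He.
  destruct (sort_surj_section _ (qmap_surj Ht Hc)) as [rep Hrep].
  set (g := fun x c => fn e x (rep x c)).
  assert (Hgq : forall x, D x -> forall s, g x (fn (qmap Ht Hc) x s) = fn e x s).
  { intros x d s.
    apply le_antisym; apply He; auto; apply (qmap_R _ _ Ht Hc); rewrite Hrep; reflexivity. }
  assert (Hgle : forall x, D x -> forall c c',
            le (qpos Ht Hc) x c c' -> le (acar A) x (g x c) (g x c')).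
  { intros x d c c' hc. rewrite <- (Hrep x c), <- (Hrep x c'), qmap_le in hc. apply He; auto. }
  set (h := {| fn := fun x (c : car (res (qpos Ht Hc) D) x) =>
                 exist (fun _ => D x) (g x (proj1_sig c)) (proj2_sig c) : car (res (acar A) D) x;
               fn_mono := fun x c c' hc => Hgle x (proj2_sig c) _ _ hc |}).
  exists h. split.
  - intros x [a d]. destruct (Hs x a) as [s <-].
    exists (exist _ (fn (qmap Ht Hc) x s) d). apply proj1_sig_inj. exact (Hgq x d s).
  - intros x d u.
    destruct (pres_surj _ T _ _ _ (res_mor_surj (qmap Ht Hc) D (qmap_surj Ht Hc)) x u) as [u' <-].
    apply proj1_sig_inj. unfold h; cbn [fn proj1_sig].
    transitivity (fn (aprod A) x (fn (Mmap T (mcomp e (incl (acar B) (fun x _ => D x)))) x u')).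
    + rewrite <- Mmap_comp.
      rewrite (Mmap_ext _ (mcomp (qmap Ht Hc) (incl (acar B) (fun x _ => D x)))) by reflexivity.
      rewrite Mmap_comp, <- qmap_morph, Hgq, Hm, Mmap_comp by exact d. reflexivity.
    + rewrite <- !Mmap_comp. f_equal. apply Mmap_ext.
      intros y [s dy]. symmetry. exact (Hgq y dy s).
Qed.
End QuotientAlgebra.
End Algebras.

Section Definability.
Context {Xi : Type} {T : Monad Xi} (L : Logics T).

Lemma definable_ext S x (K K' : car (Mo T (aset S)) x -> Prop) :
  (forall s, K s <-> K' s) -> definable L S x K -> definable L S x K'.
Proof. intros H [phi Hphi]. exists phi. intro s. rewrite <- H. apply Hphi. Qed.

Lemma definable_lam S G (f : mor (aset S) (aset G)) x K :
  definable L G x K -> definable L S x (fun s => K (fn (Mmap T f) x s)).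
Proof. intros [phi Hphi]. exists (lam L f phi). intro s. rewrite lam_spec. apply Hphi. Qed.

Lemma sqle_finite_basis (Delta : Subfam L) :
  sortwise_finite_sub L Delta -> forall S x, exists l : list (Form L S x),
    forall s t, sqle L Delta S x s t <-> forall psi, In psi l -> sat L s psi -> sat L t psi.
Proof.
  intros HD S x. destruct (HD S x) as [l [Hin Hrep]]. exists l. intros s t. split.
  - intros Hst psi Hpsi. apply Hst, Hin, Hpsi.
  - intros Hst phi Hphi Hs. destruct (Hrep phi Hphi) as [psi [Hpsi Heq]].
    apply Heq, Hst, Heq; assumption.
Qed.

Lemma finite_sub_indexed (S0 : Alphabet Xi) (l : list Xi) (I : Xi -> Type)
  (f : forall x, I x -> Form L S0 x) :
  (forall x, exists li : list (I x), forall i, In i li) ->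
  finite_sub L (fun S x phi => In x l /\ exists i,
    existT (fun S1 => {y & Form L S1 y}) S (existT _ x phi) = existT _ S0 (existT _ x (f x i))).
Proof.
  intros HI S. destruct (classic (S0 = S)) as [<-|ne].
  - set (li := fun x => proj1_sig (constructive_indefinite_description _ (HI x))).
    exists (flat_map (fun x => map (fun i => existT (fun y => Form L S0 y) x (f x i)) (li x)) l).
    split.
    + intros e He. apply in_flat_map in He as [x [Hx He]]. apply in_map_iff in He as [i [<- _]].
      split; [exact Hx | exists i; reflexivity].
    + intros x phi [Hx [i E]]. apply inj_pairT2, inj_pairT2 in E. subst phi.
      exists (f x i). split; [|intro; tauto].
      apply in_flat_map. exists x. split; [exact Hx|].
      apply (in_map (fun j => existT (fun y => Form L S0 y) x (f x j))).
      exact (proj2_sig (constructive_indefinite_description _ (HI x)) i).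
  - exists nil. split; [intros _ []|]. intros x phi [_ [i E]].
    exfalso. apply ne. symmetry. exact (f_equal (@projT1 _ _) E).
Qed.

Context (HV : varietal L).

Lemma definable_all_list {I : Type} (l : list I) S x (K : I -> car (Mo T (aset S)) x -> Prop) :
  (forall i, In i l -> definable L S x (K i)) ->
  definable L S x (fun s => forall i, In i l -> K i s).
Proof.
  destruct HV as [_ [Htrue [_ [Hand _]]]].
  induction l as [|i l IH]; intro Hd.
  - eapply definable_ext; [|apply Htrue]. simpl. tauto.
  - eapply definable_ext;
      [|apply Hand; [apply Hd; left; reflexivity | apply IH; intros; apply Hd; right; auto]].
    intro s. simpl. split; [intros [Hi Hl] j [<-|Hj]; auto | auto].
Qed.

Lemma definable_ex_list {I : Type} (l : list I) S x (K : I -> car (Mo T (aset S)) x -> Prop) :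
  (forall i, In i l -> definable L S x (K i)) ->
  definable L S x (fun s => exists i, In i l /\ K i s).
Proof.
  destruct HV as [Hfalse [_ [Hor _]]].
  induction l as [|i l IH]; intro Hd.
  - eapply definable_ext; [|apply Hfalse]. intro s. split; [tauto | intros [i [[] _]]].
  - eapply definable_ext;
      [|apply Hor; [apply Hd; left; reflexivity | apply IH; intros; apply Hd; right; auto]].
    intro s. simpl. split.
    + intros [Hi|[j [Hj Hk]]]; eauto.
    + intros [j [[<-|Hj] Hk]]; eauto.
Qed.

Lemma definable_sqle_up (Delta : Subfam L) S x (t : car (Mo T (aset S)) x) :
  sortwise_finite_sub L Delta -> definable L S x (fun s => sqle L Delta S x t s).
Proof.
  intro HD. destruct HV as [_ [Htrue _]].
  destruct (sqle_finite_basis Delta HD S x) as [l Hl].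
  eapply definable_ext; [intro s; symmetry; apply Hl|].
  apply definable_all_list. intros psi _.
  destruct (classic (sat L t psi)) as [Ht|Hnt].
  - exists psi. tauto.
  - eapply definable_ext; [|apply Htrue]. simpl. tauto.
Qed.

Lemma definable_subst S (C : SPos Xi) (Hf : spos_finite C)
  (r : forall x, car C x -> car (Mo T (aset S)) x) x K :
  definable L S x K ->
  definable L (disc_alph C Hf) x (fun s => K (fn (eval_mor (freealg T (aset S)) r) x s)).
Proof.
  destruct HV as [_ [_ [_ [_ [Hinv _]]]]].
  apply (Hinv (disc_alph C Hf) S). apply eval_mor_morph, freealg_is_alg.
Qed.

Lemma def_embedded_eval (A : PreAlg T) P (Hf : fin_subset (acar A) P) :
  def_embedded L A P <->
  forall x a, definable L (disc_alph _ Hf) x (fun s => le (acar A) x a (fn (eval_in A P) x s)).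
Proof.
  assert (E : forall x s, fn (eval_in A P) x s
              = fn (aprod A) x
                  (fn (Mmap T (incl _ P)) x (fn (Mmap T (iota (sub (acar A) P))) x s))).
  { intros x s. simpl. rewrite <- Mmap_comp. f_equal. apply Mmap_ext. reflexivity. }
  split.
  - intros Hd x a. destruct (Hd x a) as [Hf' Hdef].
    rewrite (proof_irrelevance _ Hf' Hf) in Hdef.
    eapply definable_ext; [|exact Hdef]. intro s. rewrite E. tauto.
  - intros Hd x a. exists Hf.
    eapply definable_ext; [|apply (Hd x a)]. intro s. cbv beta. rewrite E. tauto.
Qed.

Definition upward {A : SPos Xi} x (U : car A x -> Prop) : Prop :=
  forall a a', U a -> le A x a a' -> U a'.

Lemma definable_upward (A : PreAlg T) P (Hf : fin_subset (acar A) P) x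
  (U : car (acar A) x -> Prop) :
  L_definable_alg L A -> upward x U ->
  definable L (disc_alph _ Hf) x (fun s => U (fn (eval_in A P) x s)).
Proof.
  intros [[_ [Hsf _]] Hemb] HU. destruct HV as [Hfalse _]. destruct (Hsf x) as [la Hla].
  apply definable_ext
    with (K := fun s => exists a, In a la /\ U a /\ le (acar A) x a (fn (eval_in A P) x s)).
  - intro s. split.
    + intros [a [_ [Ua Ha]]]. exact (HU a _ Ua Ha).
    + intro Us. exists (fn (eval_in A P) x s).
      split; [apply Hla | split; [exact Us | apply le_refl]].
  - apply definable_ex_list. intros a _. destruct (classic (U a)) as [Ua|nUa].
    + eapply definable_ext; [|exact (proj1 (def_embedded_eval A P Hf) (Hemb P Hf) x a)].
      intro s. tauto.
    + eapply definable_ext; [|apply Hfalse]. simpl. tauto.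
Qed.

Lemma definable_eval_upward (A : PreAlg T) (C : SPos Xi) (Hf : spos_finite C)
  (r : forall x, car C x -> car (acar A) x) x (U : car (acar A) x -> Prop) :
  L_definable_alg L A -> upward x U ->
  definable L (disc_alph C Hf) x (fun s => U (fn (eval_mor A r) x s)).
Proof.
  intros HA HU.
  set (Hf' := image_finite r Hf).
  eapply definable_ext;
    [| exact (definable_lam (disc_alph C Hf) (disc_alph _ Hf')
                (assign (B := disc (sub (acar A) (image r))) (onto_image r)) x _
                (definable_upward A _ Hf' x U HA HU))].
  intro s. cbv beta. unfold eval_in. cbn [aset disc_alph]. rewrite eval_mor_relabel. tauto.
Qed.
End Definability.

Section TheoryAlgebra.
Context {Xi : Type} {T : Monad Xi} (L : Logics T) (HV : varietal L).
Variables (S : Alphabet Xi) (Delta : Subfam L) (HD : sortwise_finite_sub L Delta).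
Variables
  (Ht : forall x a b c, sqle L Delta S x a b -> sqle L Delta S x b c -> sqle L Delta S x a c)
  (Hc : forall x a b, le (acar (freealg T (aset S))) x a b -> sqle L Delta S x a b)
  (H : cong_with (freealg T (aset S)) (sqle L Delta S) Ht Hc).

Lemma theory_sortwise_finite : sortwise_finite (acar (quotalg H)).
Proof.
  intro x. destruct (sqle_finite_basis L Delta HD S x) as [l Hl].
  destruct (finitely_many_types (map (fun psi s => sat L s psi) l)) as [reps Hreps].
  exists (map (fn (qmap Ht Hc) x) reps).
  intro c. destruct (qmap_surj Ht Hc x c) as [s <-].
  destruct (Hreps s) as [v [Hv Hsv]]. apply in_map_iff. exists v. split; [|exact Hv].
  assert (Hsat : forall psi, In psi l -> (sat L s psi <-> sat L v psi)).
  { intros psi Hpsi. apply (Hsv (fun s => sat L s psi)), in_map_iff. exists psi; auto. }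
  apply (qmap_eq _ _ Ht Hc); apply Hl; intros psi Hpsi; rewrite (Hsat psi Hpsi); auto.
Qed.

Lemma theory_fin_generated : fin_generated (quotalg H).
Proof.
  exact (fin_generated_image _ _ _ (qmap_morph (freealg T (aset S)) _ Ht Hc H) (qmap_surj Ht Hc)
           (freealg_fin_generated _ (a_finite _ S))).
Qed.

Lemma theory_def_embedded P : fin_subset (acar (quotalg H)) P -> def_embedded L (quotalg H) P.
Proof.
  intro Hf. apply (def_embedded_eval L _ P Hf). intros x c.
  destruct (sort_surj_section _ (qmap_surj Ht Hc)) as [rep Hrep].
  set (r := fun y (p : car (sub (acar (quotalg H)) P) y) => rep y (proj1_sig p)).
  eapply definable_ext;
    [| exact (definable_subst L HV S _ Hf r x _ (definable_sqle_up L HV Delta S x (rep x c) HD))].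
  intro s. cbv beta.
  assert (E : fn (eval_in (quotalg H) P) x s
              = fn (qmap Ht Hc) x (fn (eval_mor (freealg T (aset S)) r) x s)).
  { rewrite (morph_eval_mor (freealg T (aset S)) _ _ r
               (qmap_morph (freealg T (aset S)) _ Ht Hc H)).
    apply eval_mor_ext. intros y p. symmetry. apply Hrep. }
  rewrite E, <- (qmap_le _ _ Ht Hc), Hrep. apply iff_refl.
Qed.

Lemma theory_L_definable : L_definable_alg L (quotalg H).
Proof.
  split; [split; [|split]|].
  - apply quotalg_is_alg, freealg_is_alg.
  - apply theory_sortwise_finite.
  - apply theory_fin_generated.
  - apply theory_def_embedded.
Qed.
End TheoryAlgebra.

Section Closure.
Context {Xi : Type} {T : Monad Xi} (L : Logics T) (HV : varietal L).

Lemma L_definable_quotient (A B : PreAlg T) (h : mor (acar A) (acar B)) :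
  L_definable_alg L A -> is_alg B -> is_morph A B h -> sort_surj h -> L_definable_alg L B.
Proof.
  intros HA HB Hm Hs. pose proof HA as [[_ [Hsf Hfg]] _].
  split; [split; [exact HB | split]|].
  - exact (sortwise_finite_image h Hs Hsf).
  - exact (fin_generated_image A B h Hm Hs Hfg).
  - intros P Hf. apply (def_embedded_eval L B P Hf). intros x b.
    destruct (sort_surj_section h Hs) as [r Hr].
    eapply definable_ext;
      [| exact (definable_eval_upward L HV A _ Hf (fun y p => r y (proj1_sig p)) x
                  (fun a => le (acar B) x b (fn h x a)) HA
                  (fun a a' Ha Haa' => le_trans _ Ha (fn_mono h Haa')))].
    intro s. cbv beta. rewrite (morph_eval_mor A B h _ Hm).
    erewrite eval_mor_ext by (intros; apply Hr). tauto.
Qed.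

Lemma L_definable_subprod n (F : {i : nat | i < n} -> PreAlg T) Q
  (HQ : alg_closed (prodalg F) Q) :
  (forall i, L_definable_alg L (F i)) -> finitary (subalg _ _ HQ) ->
  L_definable_alg L (subalg _ _ HQ).
Proof.
  intros HF Hfin. split; [exact Hfin|].
  intros P Hf. apply (def_embedded_eval L _ P Hf). intros x b.
  destruct (ord_listing n) as [idx Hidx].
  set (r := fun i y (p : car (sub (acar (subalg _ _ HQ)) P) y) => proj1_sig (proj1_sig p) i).
  assert (E : forall i s, proj1_sig (fn (eval_in _ P) x s) i = fn (eval_mor (F i) (r i)) x s).
  { intros i s. simpl. rewrite <- !Mmap_comp. f_equal. apply Mmap_ext. reflexivity. }
  eapply definable_ext;
    [| exact (definable_all_list L HV idx (disc_alph _ Hf) x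
                (fun i s => le (acar (F i)) x (proj1_sig b i) (fn (eval_mor (F i) (r i)) x s))
                (fun i _ => definable_eval_upward L HV (F i) _ Hf (r i) x _ (HF i)
                              (fun a a' Ha Haa' => le_trans _ Ha Haa')))].
  intro s. split.
  - intros Hb i. rewrite E. apply Hb, Hidx.
  - intros Hb i _. rewrite <- E. apply Hb.
Qed.

Lemma L_definable_accumulation (B : PreAlg T) : finitary B ->
  (forall D, finite_sorts D -> exists A, L_definable_alg L A /\ res_quotient D A B) ->
  L_definable_alg L B.
Proof.
  intros HB Hacc. split; [exact HB|].
  intros P Hf. apply (def_embedded_eval L B P Hf). intros x b.
  set (D := fun y => y = x \/ exists p, P y p).
  assert (HD : finite_sorts D).
  { destruct Hf as [lP HlP]. exists (x :: map (@projT1 _ _) lP).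
    intros y [<-|[p Hp]]; [left; reflexivity | right].
    apply in_map_iff. exists (existT _ y (exist _ p Hp)). auto. }
  destruct (Hacc D HD) as [A [HA [h [Hs Hm]]]].
  assert (dx : D x) by (left; reflexivity).
  set (toD := fun y (p : car (sub (acar B) P) y) =>
         exist (fun _ => D y) (proj1_sig p) (or_intror (ex_intro _ _ (proj2_sig p)))
         : car (res (acar B) D) y).
  destruct (sort_surj_section h Hs) as [j Hj].
  set (r := fun y p => proj1_sig (j y (toD y p))).
  assert (E : forall s,
            fn (eval_in B P) x s = proj1_sig (fn h x (exist _ (fn (eval_mor A r) x s) dx))).
  { intro s.
    set (u := fn (Mmap T (assign (B := res (acar A) D) (fun y p => j y (toD y p)))) x s).
    assert (Eu : fn (eval_mor A r) x s = fn (aprod A) x (fn (Mmap T (incl _ _)) x u)).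
    { unfold u. simpl. rewrite <- Mmap_comp. reflexivity. }
    rewrite Eu, Hm. unfold u. simpl. rewrite <- !Mmap_comp. f_equal. apply Mmap_ext.
    intros y p. simpl. rewrite Hj. reflexivity. }
  eapply definable_ext;
    [| exact (definable_eval_upward L HV A _ Hf r x
                (fun a => le (acar B) x b (proj1_sig (fn h x (exist _ a dx)))) HA
                (fun a a' Ha Haa' => le_trans _ Ha
                   (fn_mono h (a := exist _ a dx) (b := exist _ a' dx) Haa')))].
  intro s. cbv beta. rewrite E. tauto.
Qed.

Lemma L_definable_pseudovariety : pseudovariety (L_definable_alg L).
Proof.
  split; [intros A [HA _]; exact HA|].
  split; [intros A B h HA HB Hm Hs; exact (L_definable_quotient A B h HA HB Hm Hs)|].
  split; [exact L_definable_subprod | exact L_definable_accumulation].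
Qed.
End Closure.

Section Cover.
Context {Xi : Type} {T : Monad Xi} (L : Logics T) (HC : compositional L).

Lemma theory_alg_cover (A : PreAlg T) (D : Xi -> Prop) :
  L_definable_alg L A -> finite_sorts D ->
  exists Theta, theory_alg L Theta /\ res_quotient D Theta A.
Proof.
  intros [[HAalg [HAsf [P [HPf Hgen]]]] HAemb] [l Hl].
  set (Sg := disc_alph (sub (acar A) P) HPf).
  pose proof (proj1 (def_embedded_eval L A P HPf) (HAemb P HPf)) as Hup.
  set (phi := fun y a => proj1_sig (constructive_indefinite_description _ (Hup y a))).
  assert (Hphi : forall y a (s : car (Mo T (aset Sg)) y),
            le (acar A) y a (fn (eval_in A P) y s) <-> sat L s (phi y a)).
  { intros y a. exact (proj2_sig (constructive_indefinite_description _ (Hup y a))). }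
  destruct (HC _ (finite_sub_indexed L Sg l _ phi HAsf)) as [Delta [HDelta [HPhi Hcong]]].
  destruct (Hcong Sg) as [Ht [Hc H]].
  exists (quotalg H).
  split; [exists Sg, Delta; split; [exact HDelta | exists Ht, Hc, H; reflexivity]|].
  apply (res_quotient_factor _ _ Ht Hc H A (eval_in A P) D).
  - apply eval_mor_morph, HAalg.
  - apply eval_in_surj, Hgen.
  - intros y dy s t Hst.
    (* [phi y (eval s)] holds at [s] and belongs to [Delta], so it holds at [t]. *)
    apply Hphi, Hst; [| apply Hphi, le_refl].
    apply HPhi. split; [apply Hl, dy | exists (fn (eval_in A P) y s); reflexivity].
Qed.

Lemma generated_of_L_definable (A : PreAlg T) :
  L_definable_alg L A -> generated_pv (theory_alg L) A.
Proof.
  intros HA V [_ [_ [_ Hacc]]] Htheory. apply Hacc; [apply HA|].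
  intros D HD. destruct (theory_alg_cover A D HA HD) as [Theta [HTheta Hq]].
  exists Theta. auto.
Qed.
End Cover.

Lemma L_definable_of_generated {Xi : Type} {T : Monad Xi} (L : Logics T) (HV : varietal L)
  (A : PreAlg T) : generated_pv (theory_alg L) A -> L_definable_alg L A.
Proof.
  intro Hgen. apply Hgen; [exact (L_definable_pseudovariety L HV)|].
  intros B [S [Delta [HD [Ht [Hc [H ->]]]]]]. exact (theory_L_definable L HV S Delta HD Ht Hc H).
Qed.

Theorem theorem9p11 (Xi : Type) (T : Monad Xi) (L : Logics T)
  (HV : varietal L) (HC : compositional L)
  (A : PreAlg T) (HA : is_alg A) :
  L_definable_alg L A <-> generated_pv (theory_alg L) A.
Proof.
  split; [apply generated_of_L_definable, HC | apply L_definable_of_generated, HV].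
Qed.
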